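(* Let $T$ be a theory extending $\mathsf{ACA}_0$ and let $\alpha$ be a primitive recursive well-ordering with $\mathrm{otyp}(\alpha)<|T|_{\mathsf{WF}}$. Then $T\vdash^{\Sigma^1_1}\mathsf{WF}(\alpha)$.
   Context: A theory is a set of sentences of the language of second-order arithmetic; $T+\psi$ denotes $T\cup\{\psi\}$. $\mathrm{otyp}$ denotes order type. For primitive recursive $\prec$, $\mathsf{WF}(\prec):=\forall X(\exists x\in X\to\exists x\in X\,\forall y\in X\,\neg(y\prec x))$; $|T|_{\mathsf{WF}}$ is the supremum of the order types of primitive recursive presentations $\prec$ of well-orderings with $T\vdash\mathsf{WF}(\prec)$. $T\vdash^{\Sigma^1_1}\varphi$ means there is a true (in the standard model) $\Sigma^1_1$ sentence $\psi$ with $T+\psi\vdash\varphi$. *)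

From Stdlib Require Import List Arith.
Import ListNotations.

Inductive prf : Type :=
| PZ : prf
| PS : prf
| PP : nat -> prf
| PC : prf -> list prf -> prf
| PR : prf -> prf -> prf.

Fixpoint pev (f : prf) (xs : list nat) : nat :=
  match f with
  | PZ => 0
  | PS => S (hd 0 xs)
  | PP i => nth i xs 0
  | PC g gs => pev g (map (fun h => pev h xs) gs)
  | PR g h =>
      (fix r (n : nat) : nat :=
         match n with
         | 0 => pev g (tl xs)
         | S m => pev h (m :: r m :: tl xs)
         end) (hd 0 xs)
  end.

Inductive term : Type :=
| tvar : nat -> term
| tfun : prf -> list term -> term.

Definition tzero : term := tfun PZ [].
Definition tsucc (t : term) : term := tfun PS [t].

Inductive form : Type :=
| fbot : form
| feq : term -> term -> form
| fmem : term -> nat -> form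
| fimp : form -> form -> form
| fall1 : form -> form
| fall2 : form -> form.

Definition fneg (p : form) : form := fimp p fbot.
Definition fand (p q : form) : form := fneg (fimp p (fneg q)).
Definition fiff (p q : form) : form := fand (fimp p q) (fimp q p).
Definition fex1 (p : form) : form := fneg (fall1 (fneg p)).
Definition fex2 (p : form) : form := fneg (fall2 (fneg p)).

Fixpoint tsubst (s : nat -> term) (t : term) : term :=
  match t with
  | tvar n => s n
  | tfun f l => tfun f (map (tsubst s) l)
  end.

Definition up1 (s : nat -> term) : nat -> term :=
  fun n => match n with 0 => tvar 0 | S m => tsubst (fun k => tvar (S k)) (s m) end.

Fixpoint fsubst1 (s : nat -> term) (p : form) : form :=
  match p with
  | fbot => fbot
  | feq a b => feq (tsubst s a) (tsubst s b)
  | fmem a X => fmem (tsubst s a) X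
  | fimp a b => fimp (fsubst1 s a) (fsubst1 s b)
  | fall1 a => fall1 (fsubst1 (up1 s) a)
  | fall2 a => fall2 (fsubst1 s a)
  end.

Definition up2 (r : nat -> nat) : nat -> nat :=
  fun n => match n with 0 => 0 | S m => S (r m) end.

Fixpoint fren2 (r : nat -> nat) (p : form) : form :=
  match p with
  | fbot => fbot
  | feq a b => feq a b
  | fmem a X => fmem a (r X)
  | fimp a b => fimp (fren2 r a) (fren2 r b)
  | fall1 a => fall1 (fren2 r a)
  | fall2 a => fall2 (fren2 (up2 r) a)
  end.

Definition inst1 (t : term) : nat -> term :=
  fun n => match n with 0 => t | S m => tvar m end.
Definition inst2 (Y : nat) : nat -> nat :=
  fun n => match n with 0 => Y | S m => m end.
Definition lift1 (p : form) : form := fsubst1 (fun n => tvar (S n)) p.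
Definition lift2 (p : form) : form := fren2 S p.

Inductive LogAx : form -> Prop :=
| axK p q : LogAx (fimp p (fimp q p))
| axS p q r : LogAx (fimp (fimp p (fimp q r)) (fimp (fimp p q) (fimp p r)))
| axDN p : LogAx (fimp (fneg (fneg p)) p)
| axInst1 p t : LogAx (fimp (fall1 p) (fsubst1 (inst1 t) p))
| axInst2 p Y : LogAx (fimp (fall2 p) (fren2 (inst2 Y) p))
| axGen1 p q : LogAx (fimp (fall1 (fimp (lift1 q) p)) (fimp q (fall1 p)))
| axGen2 p q : LogAx (fimp (fall2 (fimp (lift2 q) p)) (fimp q (fall2 p)))
| axEqRefl t : LogAx (feq t t)
| axEqSubst s t p :
    LogAx (fimp (feq s t) (fimp (fsubst1 (inst1 s) p) (fsubst1 (inst1 t) p))).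

Inductive prov (T : form -> Prop) : form -> Prop :=
| pr_hyp p : T p -> prov T p
| pr_ax p : LogAx p -> prov T p
| pr_mp p q : prov T (fimp p q) -> prov T p -> prov T q
| pr_gen1 p : prov T p -> prov T (fall1 p)
| pr_gen2 p : prov T p -> prov T (fall2 p).

Definition extend (T : form -> Prop) (psi : form) : form -> Prop :=
  fun p => T p \/ p = psi.

Fixpoint tbound (n : nat) (t : term) : Prop :=
  match t with
  | tvar m => m < n
  | tfun _ l =>
      (fix go (l : list term) : Prop :=
         match l with nil => True | u :: l' => tbound n u /\ go l' end) l
  end.

Fixpoint fbound1 (n : nat) (p : form) : Prop :=
  match p with
  | fbot => True
  | feq a b => tbound n a /\ tbound n b
  | fmem a _ => tbound n a
  | fimp a b => fbound1 n a /\ fbound1 n b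
  | fall1 a => fbound1 (S n) a
  | fall2 a => fbound1 n a
  end.

Fixpoint fbound2 (n : nat) (p : form) : Prop :=
  match p with
  | fbot => True
  | feq _ _ => True
  | fmem _ X => X < n
  | fimp a b => fbound2 n a /\ fbound2 n b
  | fall1 a => fbound2 n a
  | fall2 a => fbound2 (S n) a
  end.

Definition sentence (p : form) : Prop := fbound1 0 p /\ fbound2 0 p.

Fixpoint arith (p : form) : Prop :=
  match p with
  | fbot | feq _ _ | fmem _ _ => True
  | fimp a b => arith a /\ arith b
  | fall1 a => arith a
  | fall2 _ => False
  end.

Inductive sigma11 : form -> Prop :=
| s11_arith p : arith p -> sigma11 p
| s11_ex p : sigma11 p -> sigma11 (fex2 p).

Fixpoint teval (e : nat -> nat) (t : term) : nat :=
  match t with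
  | tvar n => e n
  | tfun f l => pev f (map (teval e) l)
  end.

Definition scons {A : Type} (a : A) (e : nat -> A) : nat -> A :=
  fun n => match n with 0 => a | S m => e m end.

Fixpoint sat (e1 : nat -> nat) (e2 : nat -> nat -> Prop) (p : form) : Prop :=
  match p with
  | fbot => False
  | feq a b => teval e1 a = teval e1 b
  | fmem a X => e2 X (teval e1 a)
  | fimp a b => sat e1 e2 a -> sat e1 e2 b
  | fall1 a => forall n : nat, sat (scons n e1) e2 a
  | fall2 a => forall P : nat -> Prop, sat e1 (scons P e2) a
  end.

Definition true_sentence (p : form) : Prop :=
  sentence p /\ sat (fun _ => 0) (fun _ _ => False) p.

Fixpoint nall1 (n : nat) (p : form) : form :=
  match n with 0 => p | S m => fall1 (nall1 m p) end.
Fixpoint nall2 (n : nat) (p : form) : form :=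
  match n with 0 => p | S m => fall2 (nall2 m p) end.

(* open axioms; ACA_0 consists of their universal closures *)
Inductive aca_basic : form -> Prop :=
| ab_succ_ne0 t : aca_basic (fneg (feq (tsucc t) tzero))
| ab_succ_inj s t : aca_basic (fimp (feq (tsucc s) (tsucc t)) (feq s t))
| ab_Z ts : aca_basic (feq (tfun PZ ts) tzero)
| ab_S t ts : aca_basic (feq (tfun PS (t :: ts)) (tsucc t))
| ab_S_nil : aca_basic (feq (tfun PS []) (tsucc tzero))
| ab_P i ts : aca_basic (feq (tfun (PP i) ts) (nth i ts tzero))
| ab_C f gs ts : aca_basic (feq (tfun (PC f gs) ts) (tfun f (map (fun g => tfun g ts) gs)))
| ab_R_nil g h : aca_basic (feq (tfun (PR g h) []) (tfun g []))
| ab_R0 g h ts : aca_basic (feq (tfun (PR g h) (tzero :: ts)) (tfun g ts))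
| ab_RS g h t ts :
    aca_basic (feq (tfun (PR g h) (tsucc t :: ts))
                   (tfun h (t :: tfun (PR g h) (t :: ts) :: ts)))
| ab_ind :
    aca_basic (fall2 (fimp (fmem tzero 0)
                 (fimp (fall1 (fimp (fmem (tvar 0) 0) (fmem (tsucc (tvar 0)) 0)))
                       (fall1 (fmem (tvar 0) 0)))))
| ab_acomp p : arith p ->
    aca_basic (fex2 (fall1 (fiff (fmem (tvar 0) 0) (lift2 p)))).

Definition ACA0 (psi : form) : Prop :=
  exists th n m, aca_basic th /\ psi = nall1 n (nall2 m th) /\ sentence psi.

(* code a presents the relation  x < y  iff  a(x,y) <> 0 *)
Definition precf (a : prf) (s t : term) : form := fneg (feq (tfun a [s; t]) tzero).

(* WF(<) := forall X (exists x in X -> exists x in X forall y in X, ~ y < x) *)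
Definition WF (a : prf) : form :=
  fall2 (fimp (fex1 (fmem (tvar 0) 0))
              (fex1 (fand (fmem (tvar 0) 0)
                          (fall1 (fimp (fmem (tvar 0) 0)
                                       (fneg (precf a (tvar 0) (tvar 1)))))))).

Definition prec (a : prf) (x y : nat) : Prop := pev a [x; y] <> 0.
Definition fld (a : prf) (x : nat) : Prop := exists y, prec a x y \/ prec a y x.

Definition is_wo (a : prf) : Prop :=
  (forall x, ~ prec a x x) /\
  (forall x y z, prec a x y -> prec a y z -> prec a x z) /\
  (forall x y, fld a x -> fld a y -> x = y \/ prec a x y \/ prec a y x) /\
  well_founded (prec a).

(* otyp(a) < otyp(b): a is isomorphic to a proper initial segment of b *)
Definition otyp_lt (a b : prf) : Prop :=
  exists b0, fld b b0 /\ exists f : nat -> nat,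
    (forall x, fld a x -> fld b (f x) /\ prec b (f x) b0) /\
    (forall y, prec b y b0 -> exists x, fld a x /\ f x = y) /\
    (forall x y, fld a x -> fld a y -> (prec a x y <-> prec b (f x) (f y))).

Definition below_WF_ordinal (T : form -> Prop) (a : prf) : Prop :=
  exists b, is_wo b /\ prov T (WF b) /\ otyp_lt a b.

Definition prov_s11 (T : form -> Prop) (phi : form) : Prop :=
  exists psi, sigma11 psi /\ true_sentence psi /\ prov (extend T psi) phi.

(* If otyp(a) < otyp(b), there is an order-preserving map f from the field of a
   into b, so the Sigma^1_1 sentence "some total relation F sends a-increasing
   pairs to b-increasing pairs" is true, witnessed by the graph of f.  Over ACA_0
   this sentence turns WF(b) into WF(a): for a nonempty set X, arithmetical
   comprehension gives its image Y = F[X]; if y0 is b-least in Y, with (x0, y0)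
   in F and x0 in X, then x0 is a-least in X, because any x <a x0 in X has an
   F-image in Y below y0. *)

From Stdlib Require Import List Lia.
Import ListNotations.

Lemma prov_mono (T T' : form -> Prop) p :
  (forall q, T q -> T' q) -> prov T p -> prov T' p.
Proof.
  intros HT H; induction H.
  - apply pr_hyp; auto.
  - apply pr_ax; auto.
  - eapply pr_mp; eauto.
  - apply pr_gen1; auto.
  - apply pr_gen2; auto.
Qed.

Fixpoint fimps (G : list form) (p : form) : form :=
  match G with [] => p | h :: G' => fimp h (fimps G' p) end.

Lemma fimps_app G H p : fimps (G ++ H) p = fimps G (fimps H p).
Proof. induction G; simpl; congruence. Qed.

Section Hilbert.
Variable T : form -> Prop.

Lemma prov_K p q : prov T q -> prov T (fimp p q).
Proof. intros H; eapply pr_mp; [apply pr_ax, axK | exact H]. Qed.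

Lemma prov_S p q r :
  prov T (fimp p (fimp q r)) -> prov T (fimp p q) -> prov T (fimp p r).
Proof. intros H1 H2; eapply pr_mp; [eapply pr_mp; [apply pr_ax, axS | exact H1] | exact H2]. Qed.

Lemma prov_imp_refl p : prov T (fimp p p).
Proof. apply (prov_S p (fimp p p) p); apply pr_ax, axK. Qed.

Lemma prov_imp_trans p q r : prov T (fimp p q) -> prov T (fimp q r) -> prov T (fimp p r).
Proof. intros H1 H2; apply (prov_S p q r); [apply prov_K |]; assumption. Qed.

Lemma prov_imp_fimps G p : prov T (fimp p (fimps G p)).
Proof.
  induction G; simpl; [apply prov_imp_refl |].
  eapply prov_imp_trans; [apply IHG | apply pr_ax, axK].
Qed.

Lemma prov_imp_distr h p q r : prov T (fimp p (fimp q r)) ->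
  prov T (fimp (fimp h p) (fimp (fimp h q) (fimp h r))).
Proof.
  intros H; apply prov_imp_trans with (fimp h (fimp q r)).
  - eapply pr_mp; [apply pr_ax, axS | apply prov_K, H].
  - apply pr_ax, axS.
Qed.

End Hilbert.

Definition derives (T : form -> Prop) (G : list form) (p : form) : Prop :=
  prov T (fimps G p).

Lemma derives_hyp T G p : In p G -> derives T G p.
Proof.
  induction G as [|h G IH]; simpl; intros H; [contradiction |].
  destruct H as [<- | H]; [apply prov_imp_fimps | apply prov_K, IH, H].
Qed.

Ltac by_hyp := apply derives_hyp; rewrite ?in_app_iff; simpl; intuition.

Section Deduction.
Variable T : form -> Prop.
Notation derives := (derives T).

Lemma derives_impI G p q : derives (G ++ [p]) q -> derives G (fimp p q).
Proof. unfold derives; rewrite fimps_app; auto. Qed.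

Lemma derives_impE G p q : derives G (fimp p q) -> derives (G ++ [p]) q.
Proof. unfold derives; rewrite fimps_app; auto. Qed.

Lemma derives_mp G p q : derives G (fimp p q) -> derives G p -> derives G q.
Proof.
  assert (Hdistr : prov T (fimp (fimps G (fimp p q)) (fimp (fimps G p) (fimps G q)))).
  { induction G as [|h G IH]; simpl; [apply prov_imp_refl | apply prov_imp_distr, IH]. }
  intros H1 H2; eapply pr_mp; [eapply pr_mp; [exact Hdistr | exact H1] | exact H2].
Qed.

Lemma derives_thm G p : prov T p -> derives G p.
Proof. unfold derives; induction G; simpl; auto using prov_K. Qed.

Lemma derives_ax G p : LogAx p -> derives G p.
Proof. intros; apply derives_thm, pr_ax; assumption. Qed.

Lemma derives_app_r G H p : derives G p -> derives (G ++ H) p.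
Proof.
  intros Hp; unfold derives; rewrite fimps_app.
  eapply derives_mp; [apply derives_thm, prov_imp_fimps | exact Hp].
Qed.

Lemma derives_fimps G H c : prov T (fimps H c) -> Forall (derives G) H -> derives G c.
Proof.
  intros Hc HH; apply derives_thm with (G := G) in Hc; revert Hc.
  induction HH as [|h H Hh _ IH]; simpl; intros Hc; [exact Hc |].
  apply IH; eapply derives_mp; [exact Hc | exact Hh].
Qed.

Lemma derives_all1E G p t : derives G (fall1 p) -> derives G (fsubst1 (inst1 t) p).
Proof. intros H; eapply derives_mp; [apply derives_ax, axInst1 | exact H]. Qed.

Lemma derives_all2E G p Y : derives G (fall2 p) -> derives G (fren2 (inst2 Y) p).
Proof. intros H; eapply derives_mp; [apply derives_ax, axInst2 | exact H]. Qed.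

Lemma derives_all_intro (Q L : form -> form) :
  (forall p, prov T p -> prov T (Q p)) ->
  (forall p q, LogAx (fimp (Q (fimp (L q) p)) (fimp q (Q p)))) ->
  forall G p, derives (map L G) p -> derives G (Q p).
Proof.
  intros gen ax G p Hp.
  enough (H : forall D, derives D (Q (fimps (map L G) p)) -> derives (D ++ G) (Q p))
    by exact (H [] (gen _ Hp)).
  clear Hp.
  induction G as [|h G IH]; simpl; intros D HD.
  - rewrite app_nil_r; exact HD.
  - replace (D ++ h :: G) with ((D ++ [h]) ++ G) by (rewrite <- app_assoc; reflexivity).
    apply IH, derives_impE.
    eapply derives_mp; [apply derives_ax, ax | exact HD].
Qed.

Lemma derives_all1I G p : derives (map lift1 G) p -> derives G (fall1 p).
Proof. apply derives_all_intro; [apply pr_gen1 | apply axGen1]. Qed.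

Lemma derives_all2I G p : derives (map lift2 G) p -> derives G (fall2 p).
Proof. apply derives_all_intro; [apply pr_gen2 | apply axGen2]. Qed.

Lemma derives_by_contra G p : derives (G ++ [fneg p]) fbot -> derives G p.
Proof.
  intros H; apply derives_impI in H.
  eapply derives_mp; [apply derives_ax, axDN | exact H].
Qed.

Lemma derives_efq G p : derives G fbot -> derives G p.
Proof. intros H; apply derives_by_contra, derives_app_r, H. Qed.

Lemma derives_andI G p q : derives G p -> derives G q -> derives G (fand p q).
Proof.
  intros Hp Hq; apply derives_impI.
  apply (derives_mp _ q); [apply (derives_mp _ p) |].
  - by_hyp.
  - apply derives_app_r, Hp.
  - apply derives_app_r, Hq.
Qed.

Lemma derives_andE1 G p q : derives G (fand p q) -> derives G p.
Proof.
  intros H; apply derives_by_contra.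
  eapply derives_mp; [apply derives_app_r, H |].
  apply derives_impI, derives_impI, derives_efq.
  apply (derives_mp _ p); by_hyp.
Qed.

Lemma derives_andE2 G p q : derives G (fand p q) -> derives G q.
Proof.
  intros H; apply derives_by_contra.
  eapply derives_mp; [apply derives_app_r, H |].
  apply derives_impI, derives_app_r; by_hyp.
Qed.

Lemma derives_ex1I G p t : derives G (fsubst1 (inst1 t) p) -> derives G (fex1 p).
Proof.
  intros H; apply derives_impI.
  eapply derives_mp; [| apply derives_app_r, H].
  apply (derives_all1E _ (fneg p) t); by_hyp.
Qed.

Lemma derives_imp_trans G p q r :
  derives G (fimp p q) -> derives G (fimp q r) -> derives G (fimp p r).
Proof.
  intros H1 H2; eapply derives_mp; [eapply derives_mp |].
  - apply derives_ax, axS.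
  - eapply derives_mp; [apply derives_ax, axK | exact H2].
  - exact H1.
Qed.

Lemma derives_ex_elim (Q L : form -> form) :
  (forall G p, derives (map L G) p -> derives G (Q p)) ->
  (forall q, L (fneg q) = fneg (L q)) ->
  forall G p q, derives G (fneg (Q (fneg p))) -> derives (map L G ++ [p]) (L q) ->
  derives G q.
Proof.
  intros intro L_neg G p q Hex Hq.
  apply derives_by_contra; eapply derives_mp; [apply derives_app_r, Hex |].
  apply intro; rewrite map_app; simpl; rewrite L_neg.
  apply derives_impI in Hq.
  eapply derives_imp_trans; [apply derives_app_r, Hq |].
  by_hyp.
Qed.

Lemma derives_ex1E G p q :
  derives G (fex1 p) -> derives (map lift1 G ++ [p]) (lift1 q) -> derives G q.
Proof. apply derives_ex_elim; [apply derives_all1I | reflexivity]. Qed.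

Lemma derives_ex2E G p q :
  derives G (fex2 p) -> derives (map lift2 G ++ [p]) (lift2 q) -> derives G q.
Proof. apply derives_ex_elim; [apply derives_all2I | reflexivity]. Qed.

End Deduction.

Definition pdouble : prf := PR PZ (PC PS [PC PS [PP 1]]).
Definition ppair : prf := PR (PC pdouble [PP 0]) (PC PS [PC pdouble [PP 1]]).

(* [pair_nat x u = 2^x (2u + 1) - 1]. *)
Fixpoint pair_nat (x u : nat) : nat :=
  match x with 0 => 2 * u | S x' => S (2 * pair_nat x' u) end.

Definition pairt (s t : term) : term := tfun ppair [s; t].
Definition nonemptyf (X : nat) : form := fex1 (fmem (tvar 0) X).
Definition minimalf (a : prf) (X k : nat) : form :=
  fall1 (fimp (fmem (tvar 0) X) (fneg (precf a (tvar 0) (tvar (S k))))).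
Definition leastf (a : prf) (X : nat) : form :=
  fex1 (fand (fmem (tvar 0) X) (minimalf a X 0)).
Definition totalf (F : nat) : form := fall1 (fex1 (fmem (pairt (tvar 1) (tvar 0)) F)).
Definition monof (a b : prf) (F : nat) : form :=
  fall1 (fall1 (fall1 (fall1
    (fimp (fmem (pairt (tvar 3) (tvar 1)) F) (fimp (fmem (pairt (tvar 2) (tvar 0)) F)
       (fimp (precf a (tvar 3) (tvar 2)) (precf b (tvar 1) (tvar 0)))))))).
Definition imagef (Y X F : nat) : form :=
  fall1 (fiff (fmem (tvar 0) Y)
              (fex1 (fand (fmem (tvar 0) X) (fmem (pairt (tvar 0) (tvar 1)) F)))).

Definition embedsf (a b : prf) : form := fex2 (fand (totalf 0) (monof a b 0)).
(* Comprehension for the images [imagef 0 1 2], closed over X (1) and F (2). *)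
Definition image_compf : form := fall2 (fall2 (fex2 (imagef 0 1 2))).

Lemma derives_image_intro T G Y X F i j :
  derives T G (imagef Y X F) -> derives T G (fmem (tvar i) X) ->
  derives T G (fmem (pairt (tvar i) (tvar j)) F) -> derives T G (fmem (tvar j) Y).
Proof.
  intros HI HX HF; eapply derives_mp.
  - eapply derives_andE2, (derives_all1E _ _ _ (tvar j) HI).
  - apply (derives_ex1I _ _ _ (tvar i)), derives_andI; assumption.
Qed.

Lemma derives_image_elim T G Y X F j :
  derives T G (imagef Y X F) -> derives T G (fmem (tvar j) Y) ->
  derives T G (fex1 (fand (fmem (tvar 0) X) (fmem (pairt (tvar 0) (tvar (S j))) F))).
Proof.
  intros HI HY; eapply derives_mp; [| exact HY].
  eapply derives_andE1, (derives_all1E _ _ _ (tvar j) HI).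
Qed.

Lemma derives_totalf_at T G F i :
  derives T G (totalf F) -> derives T G (fex1 (fmem (pairt (tvar (S i)) (tvar 0)) F)).
Proof. exact (derives_all1E _ _ _ (tvar i)). Qed.

Lemma derives_monof_at T G a b F x y u v :
  derives T G (monof a b F) ->
  derives T G (fmem (pairt (tvar x) (tvar u)) F) ->
  derives T G (fmem (pairt (tvar y) (tvar v)) F) ->
  derives T G (precf a (tvar x) (tvar y)) -> derives T G (precf b (tvar u) (tvar v)).
Proof.
  intros H Hxu Hyv Hxy.
  apply (derives_mp _ _ (precf a (tvar x) (tvar y))); [| exact Hxy].
  apply (derives_mp _ _ (fmem (pairt (tvar y) (tvar v)) F)); [| exact Hyv].
  apply (derives_mp _ _ (fmem (pairt (tvar x) (tvar u)) F)); [| exact Hxu].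
  exact (derives_all1E _ _ _ (tvar v) (derives_all1E _ _ _ (tvar u)
          (derives_all1E _ _ _ (tvar y) (derives_all1E _ _ _ (tvar x) H)))).
Qed.

Lemma derives_minimalf_at T G a X k i :
  derives T G (minimalf a X k) -> derives T G (fmem (tvar i) X) ->
  derives T G (precf a (tvar i) (tvar k)) -> derives T G fbot.
Proof.
  intros H HX Hlt.
  exact (derives_mp _ _ _ _ (derives_mp _ _ _ _ (derives_all1E _ _ _ (tvar i) H) HX) Hlt).
Qed.

Lemma prov_image_nonempty T Y X F :
  prov T (fimps [totalf F; imagef Y X F; nonemptyf X] (nonemptyf Y)).
Proof.
  change (derives T [totalf F; imagef Y X F; nonemptyf X] (nonemptyf Y)).
  apply (derives_ex1E _ _ (fmem (tvar 0) X)); [by_hyp |].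
  apply (derives_ex1E _ _ (fmem (pairt (tvar 1) (tvar 0)) F));
    [apply (derives_totalf_at _ _ _ 0); by_hyp |].
  apply (derives_ex1I _ _ _ (tvar 0)).
  apply (derives_image_intro _ _ _ X F 1); by_hyp.
Qed.

Lemma prov_least_image T a b Y X F :
  prov T (fimps [totalf F; monof a b F; imagef Y X F; leastf b Y] (leastf a X)).
Proof.
  change (derives T [totalf F; monof a b F; imagef Y X F; leastf b Y] (leastf a X)).
  apply (derives_ex1E _ _ (fand (fmem (tvar 0) Y) (minimalf b Y 0))); [by_hyp |].
  apply (derives_ex1E _ _ (fand (fmem (tvar 0) X) (fmem (pairt (tvar 0) (tvar 1)) F))).
  { apply (derives_image_elim _ _ Y X F 0); [by_hyp | eapply derives_andE1; by_hyp]. }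
  apply (derives_ex1I _ _ _ (tvar 0)), derives_andI.
  { apply (derives_andE1 _ _ _ (fmem (pairt (tvar 0) (tvar 1)) F)); by_hyp. }
  apply derives_all1I.
  apply derives_impI, derives_impI.
  apply (derives_ex1E _ _ (fmem (pairt (tvar 1) (tvar 0)) F));
    [apply (derives_totalf_at _ _ _ 0); by_hyp |].
  (* Now u = tvar 0 is an F-image of z = tvar 1 <a x0 = tvar 2, and y0 = tvar 3. *)
  apply (derives_minimalf_at _ _ b Y 3 0).
  - apply (derives_andE2 _ _ (fmem (tvar 3) Y)); by_hyp.
  - apply (derives_image_intro _ _ _ X F 1); by_hyp.
  - apply (derives_monof_at _ _ a b F 1 2); [by_hyp | by_hyp | | by_hyp].
    apply (derives_andE2 _ _ (fmem (tvar 2) X)); by_hyp.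
Qed.

Lemma derives_image_comp_at T G X F :
  derives T G image_compf -> derives T G (fex2 (imagef 0 (S X) (S F))).
Proof. intros H; exact (derives_all2E _ _ _ X (derives_all2E _ _ _ F H)). Qed.

Lemma derives_WF_at T G a X :
  derives T G (WF a) -> derives T G (nonemptyf X) -> derives T G (leastf a X).
Proof. intros H; exact (derives_mp _ _ _ _ (derives_all2E _ _ _ X H)). Qed.

Lemma prov_WF_transfer T a b : prov T (fimps [image_compf; embedsf a b; WF b] (WF a)).
Proof.
  change (derives T [image_compf; embedsf a b; WF b] (fall2 (fimp (nonemptyf 0) (leastf a 0)))).
  apply derives_all2I.
  apply derives_impI.
  apply (derives_ex2E _ _ (fand (totalf 0) (monof a b 0))); [by_hyp |].
  apply (derives_ex2E _ _ (imagef 0 2 1));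
    [apply (derives_image_comp_at _ _ 1 0); by_hyp |].
  apply (derives_fimps _ _ _ _ (prov_least_image T a b 0 2 1));
    repeat apply Forall_cons; try apply Forall_nil.
  - apply (derives_andE1 _ _ _ (monof a b 1)); by_hyp.
  - apply (derives_andE2 _ _ (totalf 1)); by_hyp.
  - by_hyp.
  - apply (derives_WF_at _ _ b 0); [by_hyp |].
    apply (derives_fimps _ _ _ _ (prov_image_nonempty T 0 2 1));
      repeat apply Forall_cons; try apply Forall_nil.
    + apply (derives_andE1 _ _ _ (monof a b 1)); by_hyp.
    + by_hyp.
    + by_hyp.
Qed.

Lemma pev_pdouble n : pev pdouble [n] = 2 * n.
Proof. induction n; simpl in *; [reflexivity | rewrite IHn; lia]. Qed.

Lemma pev_ppair x u : pev ppair [x; u] = pair_nat x u.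
Proof.
  induction x as [|x IH].
  - exact (pev_pdouble u).
  - change (S (pev pdouble [pev ppair [x; u]]) = S (2 * pair_nat x u)).
    rewrite pev_pdouble, IH; reflexivity.
Qed.

Lemma pair_nat_inj x u y v : pair_nat x u = pair_nat y v -> x = y /\ u = v.
Proof.
  revert y; induction x as [|x IH]; intros [|y]; simpl; intros H; try lia.
  destruct (IH y); lia.
Qed.

Lemma sat_fand_intro e1 e2 p q : sat e1 e2 p -> sat e1 e2 q -> sat e1 e2 (fand p q).
Proof. simpl; auto. Qed.

Lemma sat_fex1_intro e1 e2 p n : sat (scons n e1) e2 p -> sat e1 e2 (fex1 p).
Proof. intros H Hall; exact (Hall n H). Qed.

Lemma sat_fex2_intro e1 e2 p P : sat e1 (scons P e2) p -> sat e1 e2 (fex2 p).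
Proof. intros H Hall; exact (Hall P H). Qed.

Lemma embedsf_sigma11 a b : sigma11 (embedsf a b).
Proof. apply s11_ex, s11_arith; simpl; tauto. Qed.

Lemma embedsf_true a b : otyp_lt a b -> true_sentence (embedsf a b).
Proof.
  intros [b0 [_ [f [_ [_ Hf]]]]].
  split; [split; simpl; repeat split; lia |].
  apply (sat_fex2_intro _ _ _ (fun n => exists x, n = pair_nat x (f x))).
  apply sat_fand_intro.
  - intros x; apply (sat_fex1_intro _ _ _ (f x)); cbn -[ppair].
    rewrite pev_ppair; exists x; reflexivity.
  - cbn -[ppair]; intros x y u v [x' Hx] [y' Hy] Hxy.
    rewrite pev_ppair in Hx, Hy.
    apply pair_nat_inj in Hx as [-> ->]; apply pair_nat_inj in Hy as [-> ->].
    apply (Hf x' y'); [exists y'; auto | exists x'; auto | exact Hxy].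
Qed.

Lemma ACA0_image_compf : ACA0 image_compf.
Proof.
  exists (fex2 (imagef 0 1 2)), 0, 2; split; [| split; [reflexivity |]].
  - apply (ab_acomp (fex1 (fand (fmem (tvar 0) 0) (fmem (pairt (tvar 0) (tvar 1)) 1)))).
    simpl; tauto.
  - split; simpl; repeat split; lia.
Qed.

Theorem mainTheorem6 (T : form -> Prop) (a : prf) :
  (forall p, T p -> sentence p) ->
  (forall psi, ACA0 psi -> prov T psi) ->
  is_wo a ->
  below_WF_ordinal T a ->
  prov_s11 T (WF a).
Proof.
  intros _ HACA _ [b [_ [HWF Hlt]]].
  exists (embedsf a b); split; [apply embedsf_sigma11 |].
  split; [apply embedsf_true, Hlt |].
  assert (Hext : forall q, T q -> extend T (embedsf a b) q) by (intros q Hq; left; exact Hq).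
  apply (derives_fimps _ [] _ _ (prov_WF_transfer _ a b));
    repeat apply Forall_cons; try apply Forall_nil.
  - exact (prov_mono _ _ _ Hext (HACA _ ACA0_image_compf)).
  - apply pr_hyp; right; reflexivity.
  - exact (prov_mono _ _ _ Hext HWF).
Qed.
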